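(* Let $G$ be a trigraph containing a fence gadget $F$ (with sides $A$, $B$) attached to a set $S$. Consider any partial contraction sequence from $G$, and the first contraction in it that involves two vertices of $V(F)$ (i.e., merges a part containing a vertex of $V(F)$ with another part containing a vertex of $V(F)$). Unless this contraction involves a pair $(a_i,b_j)$ with $a_i\in A$ and $b_j\in B$, the vertex created by it has red degree at least $5$.
   Context: A trigraph $G$ consists of a vertex set $V(G)$ and two disjoint sets of unordered pairs of distinct vertices: black edges and red edges. Contracting two distinct vertices $u,v$ replaces them by a new vertex $w$ such that, for every other vertex $z$, $wz$ is black if $uz,vz$ are both black, a non-edge if both are non-edges, and red otherwise. In a partial contraction sequence from $G$, each vertex $u$ of a later trigraph corresponds to the set $u(G)$ (its part) of vertices of $G$ merged into it; a contraction of $u,u'$ involves a vertex $v$ of $G$ if $v\in u(G)\cup u'(G)$, and involves a pair $v,v'$ if $v\in u(G),v'\in u'(G)$ or vice versa. A fence gadget is a trigraph $F$ on $A\cup B$, $A=\{a_1,\dots,a_6\}$, $B=\{b_1,\dots,b_6\}$, whose black edges are those of the cycles $a_1a_2a_3a_4a_5a_6a_1$ and $b_1b_2b_3b_4b_5b_6b_1$ together with $b_1a_6$, and whose red edges are $a_ib_i$ for $i\in[6]$ and $a_ib_{i+1}$ for $i\in[5]$. Inside a trigraph $G$, a fence gadget $F$ is attached to a nonempty set $S\subseteq V(G)\setminus V(F)$ if every vertex of $A$ is joined by a black edge to every vertex of $S$ and no vertex of $B$ is adjacent to a vertex of $S$. *)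

From mathcomp Require Import all_boot.
Set Implicit Arguments. Unset Strict Implicit. Unset Printing Implicit Defensive.

(* A trigraph on the finite vertex type V (all elements of V are vertices) is
   given by two relations black, red; well-formedness is a hypothesis. *)
Definition trigraph_wf (V : finType) (black red : rel V) : Prop :=
  [/\ symmetric black, symmetric red, irreflexive black, irreflexive red
    & forall x y, ~~ (black x y && red x y)].

(* A stage of a partial contraction sequence: each vertex is named by its
   part u(G) (a set of original vertices). *)
Record stage (V : finType) := Stage {
  parts : {set {set V}};
  sblack : rel {set V};
  sred : rel {set V} }.

Definition snon (V : finType) (s : stage V) (x y : {set V}) : bool :=
  ~~ sblack s x y && ~~ sred s x y.

Definition init_stage (V : finType) (black red : rel V) : stage V :=
  Stage [set [set v] | v : V]
    (fun P Q => [exists u, exists v, [&& P == [set u], Q == [set v] & black u v]])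
    (fun P Q => [exists u, exists v, [&& P == [set u], Q == [set v] & red u v]]).

Definition contract (V : finType) (s : stage V) (u v : {set V}) : stage V :=
  let w := u :|: v in
  let nb z := sblack s u z && sblack s v z in
  let nn z := snon s u z && snon s v z in
  let nr z := ~~ nb z && ~~ nn z in
  Stage (w |: ((parts s :\ u) :\ v))
    (fun x y => if x == w then (y != w) && nb y
                else if y == w then nb x else sblack s x y)
    (fun x y => if x == w then (y != w) && nr y
                else if y == w then nr x else sred s x y).

Definition run (V : finType) (s : stage V) (steps : seq ({set V} * {set V})) : stage V :=
  foldl (fun s p => contract s p.1 p.2) s steps.

Fixpoint valid_seq (V : finType) (s : stage V) (steps : seq ({set V} * {set V})) : bool :=
  match steps with
  | [::] => true
  | p :: t => [&& p.1 \in parts s, p.2 \in parts s, p.1 != p.2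
              & valid_seq (contract s p.1 p.2) t]
  end.

Definition red_degree (V : finType) (s : stage V) (x : {set V}) : nat :=
  #|[set y in parts s | sred s x y]|.

(* Fence gadget, indices 0..5 standing for 1..6. *)
Definition cyc6 (i j : nat) : bool := (j == i.+1 %% 6) || (i == j.+1 %% 6).

Definition fence_gadget (V : finType) (black red : rel V) (a b : 'I_6 -> V) : Prop :=
  [/\ injective a, injective b, (forall i j, a i != b j)
    & (forall i j, black (a i) (a j) = cyc6 i j)] /\
  [/\ 
      (forall i j, black (b i) (b j) = cyc6 i j),
      (forall i j, black (a i) (b j) = (i == 5 :> nat) && (j == 0 :> nat)),
      (forall i j, red (a i) (a j) = false),
      (forall i j, red (b i) (b j) = false)
    & (forall i j, red (a i) (b j) = (i == j :> nat) || (j == i.+1 :> nat))].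

Definition fence_vertices (V : finType) (a b : 'I_6 -> V) : {set V} :=
  [set a i | i : 'I_6] :|: [set b i | i : 'I_6].

Definition fence_attached (V : finType) (black red : rel V) (a b : 'I_6 -> V)
  (S : {set V}) : Prop :=
  [/\ S != set0, [disjoint S & fence_vertices a b],
      (forall i s, s \in S -> black (a i) s)
    & (forall i s, s \in S -> ~~ black (b i) s && ~~ red (b i) s)].

Definition meets_F (V : finType) (a b : 'I_6 -> V) (p : {set V} * {set V}) : bool :=
  (p.1 :&: fence_vertices a b != set0) && (p.2 :&: fence_vertices a b != set0).

Definition involves_AB (V : finType) (a b : 'I_6 -> V) (p : {set V} * {set V}) : bool :=
  [exists i, exists j, ((a i \in p.1) && (b j \in p.2)) || ((a i \in p.2) && (b j \in p.1))].

From mathcomp Require Import all_boot.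
Set Implicit Arguments. Unset Strict Implicit. Unset Printing Implicit Defensive.

(* Before the first contraction that merges two parts meeting the fence, every
   part contains at most one fence vertex, and a black edge (a non-edge) between
   two parts means that all pairs of their vertices are black (non-adjacent) in G;
   red edges need no such invariant.  So when the parts of two fence vertices x, y
   on the same side are merged, every other fence vertex z that is not black to
   both x and y, nor non-adjacent to both, lies in its own part, and that part
   becomes a red neighbour of the new vertex.  A finite check on the gadget shows
   that there are always at least five such z. *)

Definition nonadj (W : Type) (black red : rel W) (x y : W) : bool :=
  ~~ black x y && ~~ red x y.

Definition merge_red (W : Type) (black red : rel W) (x1 x2 y : W) : bool :=
  ~~ (black x1 y && black x2 y) && ~~ (nonadj black red x1 y && nonadj black red x2 y).

Definition homogeneous (V : finType) (R : rel {set V}) (r : rel V) (P : {set {set V}}) :=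
  {in P &, forall A B, A != B -> R A B -> {in A & B, forall x y, r x y}}.

Definition faithful_stage (V : finType) (black red : rel V) (s : stage V) : Prop :=
  [/\ cover (parts s) = [set: V], trivIset (parts s),
      homogeneous (sblack s) black (parts s)
    & homogeneous (snon s) (nonadj black red) (parts s)].

Definition separates (V : finType) (X : {set V}) (s : stage V) : Prop :=
  {in parts s, forall P, #|P :&: X| <= 1}.

Section Contraction.

Variables (V : finType) (s : stage V) (u v : {set V}).
Hypotheses (u_part : u \in parts s) (v_part : v \in parts s).

Lemma contract_merged_part : u :|: v \in parts (contract s u v).
Proof. by rewrite /= setU11. Qed.

Lemma parts_contract_unmerged P :
  P \in parts (contract s u v) -> P != u :|: v -> [/\ P \in parts s, P != u & P != v].
Proof. by rewrite /= in_setU1 !in_setD1 => /predU1P[->|/and3P[]]; rewrite ?eqxx. Qed.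

Lemma parts_contract_keep P :
  P \in parts s -> P != u -> P != v -> P \in parts (contract s u v).
Proof. by move=> Ps Pu Pv; rewrite /= in_setU1 !in_setD1 Pu Pv Ps orbT. Qed.

Lemma cover_contract : cover (parts (contract s u v)) = cover (parts s).
Proof.
apply/setP => x; apply/bigcupP/bigcupP => [[P Pc xP] | [P Ps xP]].
  have [EP | NP] := eqVneq P (u :|: v).
    by move: xP; rewrite EP => /setUP[]; [exists u | exists v].
  by have [Ps _ _] := parts_contract_unmerged Pc NP; exists P.
have [EP | Pu] := eqVneq P u.
  by exists (u :|: v); rewrite ?contract_merged_part // inE -EP xP.
have [EP | Pv] := eqVneq P v.
  by exists (u :|: v); rewrite ?contract_merged_part // inE -EP xP orbT.
by exists P; rewrite ?parts_contract_keep.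
Qed.

Lemma trivIset_contract : trivIset (parts s) -> trivIset (parts (contract s u v)).
Proof.
move=> /trivIsetP tiP.
have disj_merged B : B \in parts (contract s u v) -> B != u :|: v ->
    [disjoint u :|: v & B].
  move=> Bc NB; have [Bs Bu Bv] := parts_contract_unmerged Bc NB.
  by rewrite -setI_eq0 setIUl !disjoint_setI0 ?setU0 //; apply: tiP; rewrite // eq_sym.
apply/trivIsetP => A B Ac Bc AB.
have [EA | NA] := eqVneq A (u :|: v); first by rewrite EA disj_merged // -EA eq_sym.
have [EB | NB] := eqVneq B (u :|: v); first by rewrite disjoint_sym EB disj_merged.
have [As _ _] := parts_contract_unmerged Ac NA; have [Bs _ _] := parts_contract_unmerged Bc NB.
exact: tiP.
Qed.

Lemma homogeneous_contract (R R' : rel {set V}) (r : rel V) :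
  symmetric r -> homogeneous R r (parts s) ->
  (forall A B, A != B -> R' A B ->
     if A == u :|: v then R u B && R v B
     else if B == u :|: v then R u A && R v A else R A B) ->
  homogeneous R' r (parts (contract s u v)).
Proof.
move=> r_sym hR hR'.
have merged P : P \in parts (contract s u v) -> P != u :|: v -> R u P && R v P ->
    {in u :|: v & P, forall x y, r x y}.
  move=> Pc NP /andP[RuP RvP] x y; have [Ps Pu Pv] := parts_contract_unmerged Pc NP.
  case/setUP => [xu | xv] yP.
    by apply: (hR u P) => //; rewrite eq_sym.
  by apply: (hR v P) => //; rewrite eq_sym.
move=> A B Ac Bc AB /(hR' _ _ AB).
have [EA | NA] := eqVneq A (u :|: v).
  by rewrite EA; apply: merged; rewrite // -EA eq_sym.
have [EB | NB] := eqVneq B (u :|: v).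
  by move=> RA x y xA; rewrite EB => yw; rewrite r_sym (merged A).
have [As _ _] := parts_contract_unmerged Ac NA; have [Bs _ _] := parts_contract_unmerged Bc NB.
exact: hR.
Qed.

Lemma sblack_contract A B : A != B -> sblack (contract s u v) A B ->
  if A == u :|: v then sblack s u B && sblack s v B
  else if B == u :|: v then sblack s u A && sblack s v A else sblack s A B.
Proof. by move=> _ /=; case: ifP => // _ /andP[]. Qed.

Lemma snon_contract A B : A != B -> snon (contract s u v) A B ->
  if A == u :|: v then snon s u B && snon s v B
  else if B == u :|: v then snon s u A && snon s v A else snon s A B.
Proof.
rewrite {1}/snon /=; have [-> | _] := eqVneq A (u :|: v).
  rewrite eq_sym => -> /=.
  by case: (sblack s u B); case: (sblack s v B); case: (snon s u B && snon s v B).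
case: ifP => // _ _.
by case: (sblack s u A); case: (sblack s v A); case: (snon s u A && snon s v A).
Qed.

Lemma faithful_contract (black red : rel V) :
  symmetric black -> symmetric red ->
  faithful_stage black red s -> faithful_stage black red (contract s u v).
Proof.
move=> sym_b sym_r [covT tiP hb hn]; split.
- by rewrite cover_contract.
- exact: trivIset_contract.
- exact: homogeneous_contract sblack_contract.
- apply: homogeneous_contract snon_contract => // x y.
  by rewrite /nonadj sym_b sym_r.
Qed.

Lemma separates_contract (X : {set V}) :
  separates X s -> ~~ ((u :&: X != set0) && (v :&: X != set0)) ->
  separates X (contract s u v).
Proof.
move=> sepX not_both P Pc; have [-> | NP] := eqVneq P (u :|: v).
  rewrite setIUl; case/nandP: not_both => /negPn/eqP->;
  by rewrite ?set0U ?setU0 sepX.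
by have [Ps _ _] := parts_contract_unmerged Pc NP; apply: sepX.
Qed.

End Contraction.

Lemma faithful_init (V : finType) (black red : rel V) :
  faithful_stage black red (init_stage black red).
Proof.
split.
- apply/setP => x; rewrite inE; apply/bigcupP.
  by exists [set x]; rewrite ?set11 ?imset_f.
- apply/trivIsetP => _ _ /imsetP[x _ ->] /imsetP[y _ ->] xy.
  by rewrite disjoints1 in_set1; apply: contraNneq xy => ->.
- move=> _ _ /imsetP[x _ ->] /imsetP[y _ ->] _ /existsP[x' /existsP[y']].
  by case/and3P=> /eqP-> /eqP-> bxy _ _ /set1P-> /set1P->.
- move=> _ _ /imsetP[x _ ->] /imsetP[y _ ->] _ /andP[nb nr] _ _ /set1P-> /set1P->.
  apply/andP; split; [apply: contra nb | apply: contra nr] => e;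
  by apply/existsP; exists x; apply/existsP; exists y; rewrite !eqxx.
Qed.

Lemma separates_init (V : finType) (black red : rel V) (X : {set V}) :
  separates X (init_stage black red).
Proof.
by move=> _ /imsetP[x _ ->]; rewrite -(cards1 x) subset_leq_card ?subsetIl.
Qed.

Lemma valid_seq_cat (V : finType) (s : stage V) l1 l2 :
  valid_seq s (l1 ++ l2) = valid_seq s l1 && valid_seq (run s l1) l2.
Proof. by elim: l1 s => [|p l IH] s //=; rewrite IH !andbA. Qed.

Lemma run_invariants (V : finType) (black red : rel V) (X : {set V}) s steps :
  symmetric black -> symmetric red ->
  faithful_stage black red s -> separates X s -> valid_seq s steps ->
  all (fun p => ~~ ((p.1 :&: X != set0) && (p.2 :&: X != set0))) steps ->
  faithful_stage black red (run s steps) /\ separates X (run s steps).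
Proof.
move=> sym_b sym_r; elim: steps s => [|p l IH] s //= faith sepX.
case/and4P=> p1s p2s _ val /andP[not_both all_l].
by apply: IH => //; [apply: faithful_contract | apply: separates_contract].
Qed.

Lemma red_degree_contract_ge (V : finType) (black red : rel V) (s : stage V)
    (u v : {set V}) (x1 x2 : V) (Y : {set V}) :
  faithful_stage black red s -> u \in parts s -> v \in parts s ->
  x1 \in u -> x2 \in v ->
  {in Y &, injective (pblock (parts s))} ->
  {in Y, forall y, (y \notin u :|: v) && merge_red black red x1 x2 y} ->
  #|Y| <= red_degree (contract s u v) (u :|: v).
Proof.
move=> [covT _ hb hn] us vs x1u x2v injY HY.
rewrite /red_degree -(card_in_imset injY); apply/subset_leq_card/subsetP.
move=> _ /imsetP[y Yy ->]; have /andP[yw /andP[nb nn]] := HY y Yy.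
set B := pblock (parts s) y.
have yB : y \in B by rewrite mem_pblock covT inE.
have Bs : B \in parts s by rewrite pblock_mem ?covT ?inE.
have notB (P : {set V}) : y \notin P -> P != B by move=> yP; apply: contraNneq yP => ->.
have uB : u != B by apply: notB; apply: contraNN yw => yu; rewrite inE yu.
have vB : v != B by apply: notB; apply: contraNN yw => yv; rewrite inE yv orbT.
rewrite inE parts_contract_keep /=; try by rewrite // eq_sym.
rewrite eqxx eq_sym (notB _ yw) /=.
apply/andP; split.
  apply: contra nb => /andP[bu bv].
  by rewrite (hb u B us Bs uB bu x1 y) ?(hb v B vs Bs vB bv x2 y).
apply: contra nn => /andP[nu nv].
by rewrite (hn u B us Bs uB nu x1 y) ?(hn v B vs Bs vB nv x2 y).
Qed.

Definition fence_vertex (V : Type) (a b : 'I_6 -> V) (t : 'I_6 + 'I_6) : V :=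
  match t with inl i => a i | inr i => b i end.

Definition fence_black (s t : 'I_6 + 'I_6) : bool :=
  match s, t with
  | inl i, inl j | inr i, inr j => cyc6 i j
  | inl i, inr j => (i == 5 :> nat) && (j == 0 :> nat)
  | inr i, inl j => (j == 5 :> nat) && (i == 0 :> nat)
  end.

Definition fence_red (s t : 'I_6 + 'I_6) : bool :=
  match s, t with
  | inl i, inr j => (i == j :> nat) || (j == i.+1 :> nat)
  | inr i, inl j => (j == i :> nat) || (i == j.+1 :> nat)
  | _, _ => false
  end.

Definition same_side (s t : 'I_6 + 'I_6) : bool :=
  match s, t with inl _, inl _ | inr _, inr _ => true | _, _ => false end.

(* Written out because the enumeration of ['I_6] goes through [insub] and does not
   reduce under [vm_compute]. *)
Definition fence_indices : seq ('I_6 + 'I_6) :=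
  let I6 := [:: @Ordinal 6 0 isT; @Ordinal 6 1 isT; @Ordinal 6 2 isT;
                @Ordinal 6 3 isT; @Ordinal 6 4 isT; @Ordinal 6 5 isT] in
  map inl I6 ++ map inr I6.

Lemma mem_fence_indices (t : 'I_6 + 'I_6) : t \in fence_indices.
Proof. by case: t => -[[|[|[|[|[|[|m]]]]]] lt_m6]. Qed.

Lemma fence_indices_uniq : uniq fence_indices.
Proof. by vm_compute. Qed.

Lemma card_uniq_count (T : finType) (s : seq T) (A : {pred T}) :
  uniq s -> (forall x, x \in s) -> #|A| = count (mem A) s.
Proof.
move=> Us Ts; rewrite -size_filter; have /card_uniqP <- := filter_uniq (mem A) Us.
by apply: eq_card => x; rewrite mem_filter Ts andbT.
Qed.

Lemma fence_merge_red_card (s t : 'I_6 + 'I_6) : s != t -> same_side s t ->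
  5 <= #|[set y | [&& y != s, y != t & merge_red fence_black fence_red s t y]]|.
Proof.
move=> st side.
have : all (fun s => all (fun t => (s != t) && same_side s t ==>
    (4 < count (fun y => [&& y != s, y != t & merge_red fence_black fence_red s t y])
           fence_indices)) fence_indices) fence_indices.
  by vm_compute.
move=> /allP/(_ s (mem_fence_indices s))/allP/(_ t (mem_fence_indices t)).
rewrite st side => /implyP/(_ isT)/leq_trans-> //.
rewrite (card_uniq_count _ fence_indices_uniq mem_fence_indices).
by apply/eq_leq/eq_count => y /=; rewrite inE.
Qed.

Lemma fence_verticesE (V : finType) (a b : 'I_6 -> V) :
  fence_vertices a b = [set fence_vertex a b t | t : 'I_6 + 'I_6].
Proof.
apply/setP => z; rewrite inE; apply/orP/imsetP.
  by case=> /imsetP[i _ ->]; [exists (inl i) | exists (inr i)].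
by case=> -[] i _ ->; [left | right]; apply: imset_f.
Qed.

Lemma fence_gadget_model (V : finType) (black red : rel V) (a b : 'I_6 -> V) :
  symmetric black -> symmetric red -> fence_gadget black red a b ->
  [/\ injective (fence_vertex a b),
      forall s t, black (fence_vertex a b s) (fence_vertex a b t) = fence_black s t
    & forall s t, red (fence_vertex a b s) (fence_vertex a b t) = fence_red s t].
Proof.
move=> sym_b sym_r [[a_inj b_inj ab_neq b_aa] [b_bb b_ab r_aa r_bb r_ab]].
split=> [[] i [] j /= | [] i [] j | [] i [] j] /=;
  rewrite ?b_aa ?b_bb ?b_ab ?r_aa ?r_bb ?r_ab ?(sym_b (b i)) ?(sym_r (b i)) //.
- by move/a_inj->.
- by move=> e; move: (ab_neq i j); rewrite e eqxx.
- by move=> e; move: (ab_neq j i); rewrite e eqxx.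
- by move/b_inj->.
Qed.

Lemma same_side_of_not_AB (V : finType) (a b : 'I_6 -> V) (p : {set V} * {set V}) s t :
  fence_vertex a b s \in p.1 -> fence_vertex a b t \in p.2 ->
  ~~ involves_AB a b p -> same_side s t.
Proof.
case: s t => i [] j //= x1 y2; apply: contraR => _; apply/existsP.
  by exists i; apply/existsP; exists j; rewrite x1 y2.
by exists j; apply/existsP; exists i; rewrite x1 y2 orbT.
Qed.

Lemma fence_contract_red_degree (V : finType) (black red : rel V) (a b : 'I_6 -> V)
    (s : stage V) (u v : {set V}) (tu tv : 'I_6 + 'I_6) :
  symmetric black -> symmetric red -> fence_gadget black red a b ->
  faithful_stage black red s -> separates (fence_vertices a b) s ->
  u \in parts s -> v \in parts s -> u != v ->
  fence_vertex a b tu \in u -> fence_vertex a b tv \in v -> same_side tu tv ->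
  5 <= red_degree (contract s u v) (u :|: v).
Proof.
move=> sym_b sym_r gadget faith sepF us vs uv tu_u tv_v side.
have [f_inj f_black f_red] := fence_gadget_model sym_b sym_r gadget.
have [covT tiP _ _] := faith.
have in_cover x : x \in cover (parts s) by rewrite covT inE.
set f := fence_vertex a b in f_inj f_black f_red tu_u tv_v.
have same_part P t t' : P \in parts s -> f t \in P -> f t' \in P -> t = t'.
  move=> Ps tP t'P; have /card_le1_eqP eqF := sepF P Ps.
  by apply: f_inj; apply: eqF; rewrite inE ?tP ?t'P fence_verticesE imset_f.
have tu_tv : tu != tv.
  apply: contraNneq uv => e; rewrite e in tu_u.
  by rewrite -(def_pblock tiP us tu_u) (def_pblock tiP vs tv_v).
apply: leq_trans (fence_merge_red_card tu_tv side) _.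
rewrite -(card_imset _ f_inj); apply: (red_degree_contract_ge faith us vs tu_u tv_v).
  move=> _ _ /imsetP[t _ ->] /imsetP[t' _ ->] e; congr f.
  apply: (same_part (pblock (parts s) (f t))); rewrite ?pblock_mem ?mem_pblock //.
  by rewrite e mem_pblock.
move=> y /imsetP[t + ->]; rewrite inE => /and3P[t_tu t_tv red_t].
have -> : merge_red black red (f tu) (f tv) (f t) = merge_red fence_black fence_red tu tv t.
  by rewrite /merge_red /nonadj !f_black !f_red.
rewrite red_t andbT inE.
apply/norP; split; [apply: contraNN t_tu | apply: contraNN t_tv] => t_in.
  by apply/eqP; apply: (same_part u _ _ us t_in tu_u).
by apply/eqP; apply: (same_part v _ _ vs t_in tv_v).
Qed.

Theorem lemma4p5 (V : finType) (black red : rel V) (a b : 'I_6 -> V) (S : {set V})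
  (steps : seq ({set V} * {set V})) (k : nat) :
  trigraph_wf black red ->
  fence_gadget black red a b ->
  fence_attached black red a b S ->
  valid_seq (init_stage black red) steps ->
  k < size steps ->
  meets_F a b (nth (set0, set0) steps k) ->
  (forall j, j < k -> ~~ meets_F a b (nth (set0, set0) steps j)) ->
  ~~ involves_AB a b (nth (set0, set0) steps k) ->
  let p := nth (set0, set0) steps k in
  5 <= red_degree (contract (run (init_stage black red) (take k steps)) p.1 p.2)
                  (p.1 :|: p.2).
Proof.
move=> [sym_b sym_r _ _ _] gadget _ valid lt_k meet before not_AB /=.
set p := nth (set0, set0) steps k in meet not_AB *.
set s := run (init_stage black red) (take k steps).
have : valid_seq (init_stage black red) (take k steps ++ drop k steps).
  by rewrite cat_take_drop.
rewrite valid_seq_cat (drop_nth (set0, set0) lt_k) /= -/p.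
case/andP=> valid_pre /and4P[p1s p2s p12 _].
have [faith sepF] : faithful_stage black red s /\ separates (fence_vertices a b) s.
  apply: (run_invariants sym_b sym_r (faithful_init _ _) (@separates_init _ black red _) valid_pre).
  apply/(all_nthP (set0, set0)) => j; rewrite size_take lt_k => lt_jk.
  by rewrite nth_take //; apply: before.
case/andP: meet => /set0Pn[x /setIP[p1x +]] /set0Pn[y /setIP[p2y +]].
rewrite !fence_verticesE => /imsetP[tu _ ex] /imsetP[tv _ ey].
rewrite {}ex in p1x; rewrite {}ey in p2y.
apply: (fence_contract_red_degree sym_b sym_r gadget faith sepF p1s p2s p12 p1x p2y).
exact: same_side_of_not_AB p1x p2y not_AB.
Qed.
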